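(* Let $\alpha,\beta,\gamma>-1$ be real numbers with $|\alpha-\gamma|<1$ and $\alpha+\beta\le -1$, and let $N\ge1$ be an integer. Let $\tilde H$ be the $N\times N$ matrix with entries \[ \tilde H_{jk}=\frac{\Gamma(j+k+\alpha+\beta+1)}{\Gamma(j+k+\gamma+\beta+2)},\qquad 1\le j,k\le N. \] Then $\tilde H$ is real, symmetric and positive semidefinite.
   Context: $\Gamma$ denotes the gamma function. $\tilde H$ is the trailing submatrix (rows and columns indexed from $1$) of the Hankel part of the conversion matrix from Jacobi $(\alpha,\beta)$ coefficients to Jacobi $(\gamma,\beta)$ coefficients. *)

From Stdlib Require Import Reals ClassicalEpsilon Factorial.
Open Scope R_scope.

(* Stdlib has no Gamma function.  We define it (for x > 0, which is the only
   range used) by Gauss' product formula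
     Gamma x = lim_{n -> oo} n! n^x / (x (x+1) ... (x+n)). *)
Fixpoint rising_prod (x : R) (n : nat) : R :=
  match n with
  | O => x
  | S m => rising_prod x m * (x + INR (S m))
  end.

Definition gauss_seq (x : R) (n : nat) : R :=
  INR (fact n) * Rpower (INR n) x / rising_prod x n.

Definition Gamma (x : R) : R :=
  epsilon (inhabits 0) (fun l => Un_cv (gauss_seq x) l).

Definition Htilde (alpha beta gamma : R) (j k : nat) : R :=
  Gamma (INR (j + k) + alpha + beta + 1) / Gamma (INR (j + k) + gamma + beta + 2).

Definition quad_form (N : nat) (H : nat -> nat -> R) (v : nat -> R) : R :=
  sum_f 1 N (fun j => sum_f 1 N (fun k => v j * H j k * v k)).

(** Write [a = alpha + beta + 1] and [d = gamma - alpha + 1], so [d >= 0] and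
    [Htilde j k = Gamma (s + a) / Gamma (s + a + d)] with [s = j + k].  In
    Gauss' product formula the ratio of the n-th approximants is
    [n^-d * prod_(i <= n) (1 + d / (s + a + i))].  Each factor is a Hankel
    kernel [1 + d / (x_j + x_k)] with [x_j > 0], a finite Gram kernel because
    the Cauchy kernel [1 / (x_j + x_k)] is one; Gram kernels are closed under
    sums, nonnegative scalings and (Schur) products, so every approximant has
    a nonnegative quadratic form, and so has their limit [Htilde]. *)

From Stdlib Require Import Reals ClassicalEpsilon Factorial Lra Lia ZArith List.
From Coquelicot Require Import Coquelicot.
Import ListNotations.
Open Scope R_scope.

(** * Convergence of Gauss' product *)

Lemma exp_tangent_le y z : exp z * (1 + y - z) <= exp y.
Proof.
  replace y with (z + (y - z)) at 2 by ring. rewrite exp_plus.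
  apply Rmult_le_compat_l; [left; apply exp_pos|].
  pose proof (exp_ineq1_le (y - z)). lra.
Qed.

Lemma Rpower_le_bernoulli q x : 0 < q -> 0 <= x <= 1 -> Rpower q x <= 1 + x * (q - 1).
Proof.
  intros hq [h0 h1]. unfold Rpower.
  set (L := ln q). set (A := exp (x * L)).
  (* convexity of exp: tangent lines at [x L], evaluated at [L] and at [0] *)
  assert (tL := exp_tangent_le L (x * L)). assert (t0 := exp_tangent_le 0 (x * L)).
  assert (hL : exp L = q) by (apply exp_ln; auto).
  rewrite exp_0 in t0. rewrite hL in tL. fold A in tL, t0.
  assert (x * (A * (1 + L - x * L)) <= x * q) by (apply Rmult_le_compat_l; lra).
  assert ((1 - x) * (A * (1 + 0 - x * L)) <= (1 - x) * 1) by (apply Rmult_le_compat_l; lra).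
  assert (x * (A * (1 + L - x * L)) + (1 - x) * (A * (1 + 0 - x * L)) = A) by ring.
  lra.
Qed.

Lemma ln_ge_1_minus_inv y : 0 < y -> 1 - / y <= ln y.
Proof.
  intro hy. pose proof (exp_ineq1_le (ln (/ y))) as h.
  rewrite exp_ln in h by (apply Rinv_0_lt_compat; auto).
  rewrite ln_Rinv in h by auto. lra.
Qed.

Lemma rising_prod_pos x n : 0 < x -> 0 < rising_prod x n.
Proof.
  intro hx; induction n; cbn [rising_prod]; auto.
  apply Rmult_lt_0_compat; auto. pose proof (pos_INR (S n)); lra.
Qed.

Lemma rising_prod_shift x n : rising_prod (x + 1) n * x = rising_prod x n * (x + 1 + INR n).
Proof.
  induction n as [|m IH]; cbn [rising_prod]; [simpl; ring|].
  rewrite S_INR.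
  transitivity (rising_prod (x + 1) m * x * (x + 1 + (INR m + 1))); [ring|].
  rewrite IH. ring.
Qed.

Lemma gauss_seq_pos x n : 0 < x -> 0 < gauss_seq x n.
Proof.
  intro hx; unfold gauss_seq, Rdiv.
  apply Rmult_lt_0_compat; [apply Rmult_lt_0_compat|].
  - apply lt_0_INR, lt_O_fact.
  - apply exp_pos.
  - apply Rinv_0_lt_compat, rising_prod_pos; auto.
Qed.

Lemma gauss_seq_1 x : 0 < x -> gauss_seq x 1 = / (x * (x + 1)).
Proof.
  intro hx. unfold gauss_seq, Rpower. cbn [rising_prod fact].
  replace (INR 1) with 1 by reflexivity. rewrite ln_1, Rmult_0_r, exp_0.
  simpl (INR (1 * 1)). field. lra.
Qed.

Lemma gauss_seq_S x m : 0 < x -> (1 <= m)%nat ->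
  gauss_seq x (S m) = gauss_seq x m *
    (INR (S m) * Rpower (INR (S m) / INR m) x / (x + INR (S m))).
Proof.
  intros hx hm. unfold gauss_seq. cbn [rising_prod].
  assert (hM : 0 < INR m) by (apply lt_0_INR; lia).
  assert (hM1 : 0 < INR (S m)) by (apply lt_0_INR; lia).
  assert (E : Rpower (INR (S m)) x = Rpower (INR m) x * Rpower (INR (S m) / INR m) x).
  { rewrite Rpower_mult_distr; auto; [f_equal; field; lra|].
    apply Rdiv_lt_0_compat; auto. }
  rewrite E, fact_simpl, mult_INR.
  pose proof (rising_prod_pos x m hx).
  field. split; lra.
Qed.

Lemma gauss_seq_shift x m : 0 < x ->
  gauss_seq (x + 1) (S m) = gauss_seq x (S m) * (INR (S m) * x / (x + 1 + INR (S m))).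
Proof.
  intros hx. pose proof (lt_0_INR (S m) (Nat.lt_0_succ m)).
  unfold gauss_seq. rewrite Rpower_plus, Rpower_1 by auto.
  assert (E : rising_prod (x + 1) (S m) = rising_prod x (S m) * (x + 1 + INR (S m)) / x).
  { rewrite <- rising_prod_shift. field. lra. }
  rewrite E. pose proof (rising_prod_pos x (S m) hx). field. lra.
Qed.

Lemma gauss_seq_le_S x m : 0 < x -> (1 <= m)%nat -> gauss_seq x m <= gauss_seq x (S m).
Proof.
  intros hx hm. rewrite gauss_seq_S by auto.
  assert (hM : 0 < INR m) by (apply lt_0_INR; lia).
  assert (hM1 : INR (S m) = INR m + 1) by apply S_INR.
  set (q := INR (S m) / INR m).
  assert (hq : 0 < q) by (unfold q; apply Rdiv_lt_0_compat; lra).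
  assert (hexp : 1 + x * ln q <= Rpower q x).
  { unfold Rpower. pose proof (exp_ineq1_le (x * ln q)). lra. }
  assert (hln : x * (1 - / q) <= x * ln q)
    by (apply Rmult_le_compat_l; [lra | apply ln_ge_1_minus_inv; auto]).
  assert (hinv : x * (1 - / q) = x / INR (S m)) by (unfold q; rewrite hM1; field; lra).
  assert (hfactor : 1 <= INR (S m) * Rpower q x / (x + INR (S m))).
  { apply Rcomplements.Rle_div_r; [lra|].
    assert (INR (S m) * (1 + x / INR (S m)) <= INR (S m) * Rpower q x)
      by (apply Rmult_le_compat_l; lra).
    assert (INR (S m) * (1 + x / INR (S m)) = x + INR (S m)) by (field; lra).
    lra. }
  pose proof (gauss_seq_pos x m hx).
  assert (gauss_seq x m * 1 <= gauss_seq x m * (INR (S m) * Rpower q x / (x + INR (S m))))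
    by (apply Rmult_le_compat_l; lra).
  lra.
Qed.

Lemma gauss_seq_mul_le_inv x n : 0 < x <= 1 -> (1 <= n)%nat ->
  gauss_seq x n * ((INR n + x) / INR n) <= / x.
Proof.
  intros hx hn. induction n as [|m IH]; [lia|].
  destruct m as [|m].
  - rewrite gauss_seq_1 by lra. replace (INR 1) with 1 by reflexivity.
    right; field; lra.
  - specialize (IH ltac:(lia)).
    rewrite gauss_seq_S by (lra || lia).
    set (M := INR (S m)) in *. set (M1 := INR (S (S m))).
    assert (hM1 : M1 = M + 1) by apply S_INR.
    assert (hM : 0 < M) by (apply lt_0_INR; lia).
    assert (hq : 0 < M1 / M) by (apply Rdiv_lt_0_compat; lra).
    pose proof (Rpower_le_bernoulli (M1 / M) x hq ltac:(lra)) as hb.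
    assert (E : gauss_seq x (S m) * (M1 * Rpower (M1 / M) x / (x + M1)) * ((M1 + x) / M1)
              = gauss_seq x (S m) * Rpower (M1 / M) x) by (field; lra).
    rewrite E.
    assert (1 + x * (M1 / M - 1) = (M + x) / M) by (rewrite hM1; field; lra).
    pose proof (gauss_seq_pos x (S m) (proj1 hx)).
    assert (gauss_seq x (S m) * Rpower (M1 / M) x <= gauss_seq x (S m) * ((M + x) / M))
      by (apply Rmult_le_compat_l; lra).
    lra.
Qed.

Lemma gauss_seq_le_inv x n : 0 < x <= 1 -> (1 <= n)%nat -> gauss_seq x n <= / x.
Proof.
  intros hx hn. eapply Rle_trans; [|exact (gauss_seq_mul_le_inv x n hx hn)].
  pose proof (gauss_seq_pos x n (proj1 hx)).
  assert (0 < INR n) by (apply lt_0_INR; lia).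
  assert (1 <= (INR n + x) / INR n) by (apply Rcomplements.Rle_div_r; lra).
  rewrite <- (Rmult_1_r (gauss_seq x n)) at 1.
  apply Rmult_le_compat_l; lra.
Qed.

Lemma gauss_seq_cvg_le_1 x : 0 < x <= 1 -> exists l, 0 < l /\ is_lim_seq (gauss_seq x) l.
Proof.
  intro hx.
  set (u := fun n => gauss_seq x (S n)).
  assert (hinc : forall n, u n <= u (S n)) by (intro n; apply gauss_seq_le_S; lra || lia).
  assert (hbd : forall n, u n <= / x) by (intro n; apply gauss_seq_le_inv; lra || lia).
  pose proof (Lim_seq_correct' u (ex_finite_lim_seq_incr u (/ x) hinc hbd)) as hl.
  exists (real (Lim_seq u)). split; [|apply is_lim_seq_incr_1; exact hl].
  assert (hle : Rbar_le (u 0%nat) (real (Lim_seq u))).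
  { apply (is_lim_seq_le (fun _ => u 0%nat) u); [|apply is_lim_seq_const|exact hl].
    intro n. induction n; [lra|]. eapply Rle_trans; [exact IHn | apply hinc]. }
  exact (Rlt_le_trans _ _ _ (gauss_seq_pos x 1 (proj1 hx)) hle).
Qed.

Lemma is_lim_seq_INR_mul_div x :
  0 < x -> is_lim_seq (fun n => INR n * x / (x + 1 + INR n)) x.
Proof.
  intro hx.
  apply is_lim_seq_ext with (fun n => x - x * (x + 1) * / (x + 1 + INR n)).
  { intro n. pose proof (pos_INR n). field. lra. }
  replace (Finite x) with (Finite (x - x * (x + 1) * 0)) by (f_equal; ring).
  apply is_lim_seq_minus'; [apply is_lim_seq_const|].
  apply is_lim_seq_scal_l with (lu := Finite 0).
  replace (Finite 0) with (Rbar_inv p_infty) by reflexivity.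
  apply is_lim_seq_inv; [|discriminate].
  apply is_lim_seq_le_p_loc with (u := INR); [|apply is_lim_seq_INR].
  exists 0%nat. intros n _. lra.
Qed.

Lemma gauss_seq_cvg x : 0 < x -> exists l, 0 < l /\ is_lim_seq (gauss_seq x) l.
Proof.
  intro hx.
  assert (hk : exists k : nat, x <= INR k + 1).
  { destruct (archimed x) as [hup _]. exists (Z.to_nat (up x)).
    rewrite INR_IZR_INZ, Z2Nat.id; [lra|]. apply le_IZR. lra. }
  destruct hk as [k hk]. revert x hx hk.
  induction k as [|k IH]; intros x hx hk.
  { apply gauss_seq_cvg_le_1. simpl in hk. lra. }
  destruct (Rle_dec x 1); [apply gauss_seq_cvg_le_1; lra|].
  rewrite S_INR in hk. destruct (IH (x - 1) ltac:(lra) ltac:(lra)) as [l [hl hc]].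
  exists (l * (x - 1)). split; [apply Rmult_lt_0_compat; lra|].
  apply is_lim_seq_incr_1.
  apply is_lim_seq_ext with
    (fun m => gauss_seq (x - 1) (S m) * (INR (S m) * (x - 1) / (x - 1 + 1 + INR (S m)))).
  { intro m. rewrite <- gauss_seq_shift by lra. f_equal. ring. }
  apply is_lim_seq_mult'; [apply (is_lim_seq_incr_1 (gauss_seq (x - 1))); auto|].
  apply (is_lim_seq_incr_1 (fun n => INR n * (x - 1) / (x - 1 + 1 + INR n))).
  apply is_lim_seq_INR_mul_div. lra.
Qed.

Lemma Gamma_pos_is_lim x : 0 < x -> 0 < Gamma x /\ is_lim_seq (gauss_seq x) (Gamma x).
Proof.
  intro hx. destruct (gauss_seq_cvg x hx) as [l [hl hc]].
  assert (hG : Un_cv (gauss_seq x) (Gamma x)).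
  { unfold Gamma. apply epsilon_spec. exists l. apply is_lim_seq_Reals; auto. }
  replace (Gamma x) with l; [auto|].
  eapply UL_sequence; [apply is_lim_seq_Reals; exact hc | exact hG].
Qed.

(** * Gram kernels *)

Definition lsum (l : list nat) (f : nat -> R) : R :=
  fold_right (fun j acc => f j + acc) 0 l.

Lemma lsum_ext l f g : (forall j, In j l -> f j = g j) -> lsum l f = lsum l g.
Proof. induction l; simpl; auto. intro H. rewrite H, IHl; auto. Qed.

Lemma lsum_app l1 l2 f : lsum (l1 ++ l2) f = lsum l1 f + lsum l2 f.
Proof. induction l1; simpl; [ring|]. rewrite IHl1. ring. Qed.

Lemma lsum_plus l f g : lsum l (fun j => f j + g j) = lsum l f + lsum l g.
Proof. induction l; simpl; [ring|]. rewrite IHl. ring. Qed.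

Lemma lsum_scal l c f : lsum l (fun j => c * f j) = c * lsum l f.
Proof. induction l; simpl; [ring|]. rewrite IHl. ring. Qed.

Lemma lsum_mul_lsum l f g :
  lsum l (fun j => lsum l (fun k => f j * g k)) = lsum l f * lsum l g.
Proof.
  rewrite (lsum_ext l _ (fun j => lsum l g * f j)).
  - rewrite lsum_scal. ring.
  - intros j _. rewrite lsum_scal. ring.
Qed.

Lemma sum_f_lsum N f : (1 <= N)%nat -> sum_f 1 N f = lsum (seq 1 N) f.
Proof.
  intro hN. unfold sum_f. destruct N as [|n]; [lia|].
  replace (S n - 1)%nat with n by lia. clear hN.
  induction n; [simpl; ring|].
  rewrite seq_S, lsum_app. simpl sum_f_R0. rewrite IHn. simpl lsum.
  replace (S (n + 1)) with (S (S n)) by lia. ring.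
Qed.

Lemma quad_form_lsum N H v : (1 <= N)%nat ->
  quad_form N H v = lsum (seq 1 N) (fun j => lsum (seq 1 N) (fun k => v j * H j k * v k)).
Proof.
  intro hN. unfold quad_form. rewrite sum_f_lsum by auto.
  apply lsum_ext. intros j _. apply sum_f_lsum; auto.
Qed.

Lemma is_lim_seq_lsum (l : list nat) (f : nat -> nat -> R) (g : nat -> R) :
  (forall j, In j l -> is_lim_seq (fun n => f n j) (g j)) ->
  is_lim_seq (fun n => lsum l (f n)) (lsum l g).
Proof.
  induction l as [|a l IH]; intros H; simpl; [apply is_lim_seq_const|].
  apply (is_lim_seq_plus' (fun n => f n a) (fun n => lsum l (f n))).
  - apply H; simpl; auto.
  - apply IH; intros; apply H; simpl; auto.
Qed.

Definition gram_sum (L : list (nat -> R)) (j k : nat) : R :=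
  fold_right (fun f acc => f j * f k + acc) 0 L.

Definition gram_kernel (N : nat) (K : nat -> nat -> R) : Prop :=
  exists L, forall j k, (1 <= j <= N)%nat -> (1 <= k <= N)%nat -> K j k = gram_sum L j k.

Lemma gram_kernel_ext N K1 K2 :
  (forall j k, (1 <= j <= N)%nat -> (1 <= k <= N)%nat -> K1 j k = K2 j k) ->
  gram_kernel N K1 -> gram_kernel N K2.
Proof. intros H [L HL]. exists L. intros. rewrite <- H; auto. Qed.

Lemma quad_form_gram_nonneg N K v : (1 <= N)%nat -> gram_kernel N K -> 0 <= quad_form N K v.
Proof.
  intros hN [L HL]. rewrite quad_form_lsum by auto.
  set (l := seq 1 N).
  rewrite (lsum_ext l _ (fun j => lsum l (fun k => v j * gram_sum L j k * v k))).
  2:{ intros j hj. apply lsum_ext. intros k hk. unfold l in *.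
      apply in_seq in hj. apply in_seq in hk. rewrite HL; auto; lia. }
  clear. induction L as [|f L IH]; simpl.
  - rewrite (lsum_ext l _ (fun j => lsum l (fun k => (v j * 0) * (v k * 0)))).
    + rewrite lsum_mul_lsum. nra.
    + intros j _. apply lsum_ext. intros; ring.
  - rewrite (lsum_ext l _ (fun j => lsum l (fun k => (v j * f j) * (v k * f k))
                                  + lsum l (fun k => v j * gram_sum L j k * v k))).
    + rewrite lsum_plus, lsum_mul_lsum. nra.
    + intros j _. rewrite <- lsum_plus. apply lsum_ext. intros; ring.
Qed.

Lemma gram_kernel_one N : gram_kernel N (fun _ _ => 1).
Proof. exists [fun _ => 1]. intros. simpl. ring. Qed.

Lemma gram_sum_app L1 L2 j k : gram_sum (L1 ++ L2) j k = gram_sum L1 j k + gram_sum L2 j k.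
Proof. induction L1; simpl; [ring|]. unfold gram_sum in *. rewrite IHL1. ring. Qed.

Lemma gram_kernel_add N K1 K2 :
  gram_kernel N K1 -> gram_kernel N K2 -> gram_kernel N (fun j k => K1 j k + K2 j k).
Proof.
  intros [L1 H1] [L2 H2]. exists (L1 ++ L2). intros.
  rewrite gram_sum_app, H1, H2; auto.
Qed.

Lemma gram_sum_scale f L j k :
  gram_sum (map (fun g i => f i * g i) L) j k = f j * f k * gram_sum L j k.
Proof. induction L; simpl; [ring|]. rewrite IHL. ring. Qed.

Lemma gram_kernel_scal N c K : 0 <= c -> gram_kernel N K -> gram_kernel N (fun j k => c * K j k).
Proof.
  intros hc [L H]. exists (map (fun g i => sqrt c * g i) L). intros.
  rewrite gram_sum_scale, H, sqrt_sqrt; auto.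
Qed.

(* Schur product theorem: the products [f i * g i] of the two families span it. *)
Lemma gram_kernel_mul N K1 K2 :
  gram_kernel N K1 -> gram_kernel N K2 -> gram_kernel N (fun j k => K1 j k * K2 j k).
Proof.
  intros [L1 H1] [L2 H2]. exists (flat_map (fun f => map (fun g i => f i * g i) L2) L1).
  intros j k hj hk. rewrite H1, H2 by auto. clear.
  induction L1 as [|f L1 IH]; [simpl; ring|].
  cbn [flat_map]. rewrite gram_sum_app, gram_sum_scale, <- IH. simpl. ring.
Qed.

(** * The Cauchy kernel *)

Section CauchyKernel.

Variable x : nat -> R.

(* With [c = x m]:  1/(a+b) = u(a) u(b) + g(a) g(b)/(a+b)  for
   u(a) = sqrt(2c)/(a+c) and g(a) = (a-c)/(a+c).  Since g vanishes at a = c,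
   peeling off c = x 1, ..., x N in turn leaves a remainder that vanishes on
   [1..N]. *)
Definition cauchy_u m j := sqrt (2 * x m) / (x j + x m).
Definition cauchy_g m j := (x j - x m) / (x j + x m).

Fixpoint cauchy_gprod m j :=
  match m with O => 1 | S m' => cauchy_gprod m' j * cauchy_g (S m') j end.

Definition cauchy_rem m j k := cauchy_gprod m j * cauchy_gprod m k * / (x j + x k).

Lemma cauchy_peel m j k : 0 < x m -> 0 < x j -> 0 < x k ->
  / (x j + x k) = cauchy_u m j * cauchy_u m k + cauchy_g m j * cauchy_g m k * / (x j + x k).
Proof.
  intros hm hj hk. unfold cauchy_u, cauchy_g.
  replace (sqrt (2 * x m) / (x j + x m) * (sqrt (2 * x m) / (x k + x m)))
    with (sqrt (2 * x m) * sqrt (2 * x m) / ((x j + x m) * (x k + x m))) by (field; lra).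
  rewrite sqrt_sqrt by lra. field. lra.
Qed.

Definition cauchy_vec m j := cauchy_u (S m) j * cauchy_gprod m j.

Lemma cauchy_rem_S m j k : 0 < x (S m) -> 0 < x j -> 0 < x k ->
  cauchy_rem m j k = cauchy_vec m j * cauchy_vec m k + cauchy_rem (S m) j k.
Proof.
  intros. unfold cauchy_rem, cauchy_vec. cbn [cauchy_gprod].
  rewrite (cauchy_peel (S m) j k) at 1 by auto. ring.
Qed.

Lemma cauchy_gprod_eq0 m j : (1 <= j <= m)%nat -> cauchy_gprod m j = 0.
Proof.
  induction m; intros; [lia|]. cbn [cauchy_gprod].
  destruct (Nat.eq_dec j (S m)) as [->|].
  - unfold cauchy_g. rewrite Rminus_diag. unfold Rdiv. ring.
  - rewrite IHm by lia. ring.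
Qed.

Lemma cauchy_rem_decomp N j k : (forall i, (1 <= i <= N)%nat -> 0 < x i) ->
  (1 <= j <= N)%nat -> (1 <= k <= N)%nat -> forall q p, (p + q <= N)%nat ->
  cauchy_rem p j k = gram_sum (map cauchy_vec (seq p q)) j k + cauchy_rem (p + q) j k.
Proof.
  intros hx hj hk. induction q; intros p hpq.
  - rewrite Nat.add_0_r. simpl. ring.
  - rewrite cauchy_rem_S by (apply hx; lia).
    rewrite IHq by lia. replace (S p + q)%nat with (p + S q)%nat by lia.
    simpl. ring.
Qed.

Lemma gram_kernel_cauchy N : (forall i, (1 <= i <= N)%nat -> 0 < x i) ->
  gram_kernel N (fun j k => / (x j + x k)).
Proof.
  intros hx. exists (map cauchy_vec (seq 0 N)). intros j k hj hk.
  pose proof (cauchy_rem_decomp N j k hx hj hk N 0 ltac:(lia)) as hd.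
  unfold cauchy_rem in hd. rewrite (cauchy_gprod_eq0 (0 + N) j) in hd by lia.
  simpl cauchy_gprod in hd. lra.
Qed.

End CauchyKernel.

(** * Gauss approximants of the Gamma ratio *)

Definition factor_kernel (a d : R) (i j k : nat) : R := 1 + d / (INR (j + k) + a + INR i).

Fixpoint factor_prod (a d : R) (n j k : nat) : R :=
  match n with
  | O => factor_kernel a d 0 j k
  | S m => factor_prod a d m j k * factor_kernel a d (S m) j k
  end.

Lemma gram_kernel_factor N a d i : -2 < a -> 0 <= d -> gram_kernel N (factor_kernel a d i).
Proof.
  intros ha hd.
  set (x := fun j => INR j + (a + INR i) / 2).
  apply gram_kernel_ext with (fun j k => 1 + d * / (x j + x k)).
  { intros j k _ _. unfold factor_kernel, x. rewrite plus_INR.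
    unfold Rdiv. do 3 f_equal. field. }
  apply (gram_kernel_add N (fun _ _ => 1)); [apply gram_kernel_one|].
  apply (gram_kernel_scal N d (fun j k => / (x j + x k))); auto.
  apply gram_kernel_cauchy. intros j hj. unfold x.
  assert (1 <= INR j) by (apply (le_INR 1); lia). pose proof (pos_INR i). lra.
Qed.

Lemma gram_kernel_factor_prod N a d n : -2 < a -> 0 <= d -> gram_kernel N (factor_prod a d n).
Proof.
  intros. induction n; simpl; [apply gram_kernel_factor; auto|].
  apply (gram_kernel_mul N (factor_prod a d n)); auto. apply gram_kernel_factor; auto.
Qed.

Lemma rising_prod_ratio a d n j k : 0 < INR (j + k) + a -> 0 <= d ->
  rising_prod (INR (j + k) + a + d) n / rising_prod (INR (j + k) + a) n = factor_prod a d n j k.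
Proof.
  intros hs hd. set (s := INR (j + k)) in *.
  induction n; cbn [rising_prod factor_prod]; unfold factor_kernel; fold s.
  - simpl INR. field. lra.
  - rewrite <- IHn. pose proof (rising_prod_pos (s + a) n hs). pose proof (pos_INR (S n)).
    field. lra.
Qed.

Lemma gauss_seq_div y z n : 0 < y -> 0 < z ->
  gauss_seq y n / gauss_seq z n = Rpower (INR n) (y - z) * (rising_prod z n / rising_prod y n).
Proof.
  intros hy hz. unfold gauss_seq.
  replace (Rpower (INR n) y) with (Rpower (INR n) z * Rpower (INR n) (y - z))
    by (rewrite <- Rpower_plus; f_equal; ring).
  pose proof (rising_prod_pos y n hy). pose proof (rising_prod_pos z n hz).
  assert (0 < Rpower (INR n) z) by apply exp_pos.
  assert (0 < INR (fact n)) by (apply lt_0_INR, lt_O_fact).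
  field. repeat split; lra.
Qed.

Definition gauss_ratio_kernel (a d : R) (n j k : nat) : R :=
  gauss_seq (INR (j + k) + a) n / gauss_seq (INR (j + k) + a + d) n.

Lemma gram_kernel_gauss_ratio N a d n :
  -2 < a -> 0 <= d -> gram_kernel N (gauss_ratio_kernel a d n).
Proof.
  intros ha hd.
  apply gram_kernel_ext with (fun j k => Rpower (INR n) (- d) * factor_prod a d n j k).
  - intros j k hj hk.
    assert (2 <= INR (j + k)) by (apply (le_INR 2); lia).
    unfold gauss_ratio_kernel. rewrite gauss_seq_div by lra.
    rewrite rising_prod_ratio by lra. do 2 f_equal. ring.
  - apply gram_kernel_scal; [left; apply exp_pos|]. apply gram_kernel_factor_prod; auto.
Qed.

Lemma is_lim_seq_gauss_ratio a d j k : 0 < INR (j + k) + a -> 0 <= d ->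
  is_lim_seq (fun n => gauss_ratio_kernel a d n j k)
    (Gamma (INR (j + k) + a) / Gamma (INR (j + k) + a + d)).
Proof.
  intros hs hd. unfold gauss_ratio_kernel.
  destruct (Gamma_pos_is_lim (INR (j + k) + a)) as [_ h1]; [lra|].
  destruct (Gamma_pos_is_lim (INR (j + k) + a + d)) as [h2 h3]; [lra|].
  apply is_lim_seq_div'; auto. lra.
Qed.

(** * Limits of Gram kernels *)

Lemma quad_form_nonneg_lim N (K : nat -> nat -> nat -> R) (H : nat -> nat -> R) v : (1 <= N)%nat ->
  (forall n, gram_kernel N (K n)) ->
  (forall j k, (1 <= j <= N)%nat -> (1 <= k <= N)%nat -> is_lim_seq (fun n => K n j k) (H j k)) ->
  0 <= quad_form N H v.
Proof.
  intros hN hK hlim.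
  assert (hq : is_lim_seq (fun n => quad_form N (K n) v) (quad_form N H v)).
  { apply is_lim_seq_ext with
      (fun n => lsum (seq 1 N) (fun j => lsum (seq 1 N) (fun k => v j * K n j k * v k))).
    { intro n. rewrite quad_form_lsum; auto. }
    rewrite quad_form_lsum by auto.
    apply (is_lim_seq_lsum _ (fun n j => lsum (seq 1 N) (fun k => v j * K n j k * v k))).
    intros j hj. apply (is_lim_seq_lsum _ (fun n k => v j * K n j k * v k)).
    intros k hk. apply in_seq in hj. apply in_seq in hk.
    apply (is_lim_seq_mult' _ (fun _ => v k) (v j * H j k)); [|apply is_lim_seq_const].
    apply (is_lim_seq_mult' (fun _ => v j) _ _ (H j k)); [apply is_lim_seq_const|].
    apply hlim; lia. }
  assert (hle : Rbar_le 0 (quad_form N H v)).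
  { apply (is_lim_seq_le (fun _ => 0) (fun n => quad_form N (K n) v));
      [|apply is_lim_seq_const|exact hq].
    intro n. apply quad_form_gram_nonneg; auto. }
  exact hle.
Qed.

Theorem mainTheorem10 (alpha beta gamma : R) (N : nat)
  (ha : -1 < alpha) (hb : -1 < beta) (hg : -1 < gamma)
  (hag : Rabs (alpha - gamma) < 1) (hab : alpha + beta <= -1)
  (hN : (1 <= N)%nat) :
  (forall j k : nat, (1 <= j <= N)%nat -> (1 <= k <= N)%nat ->
     Htilde alpha beta gamma j k = Htilde alpha beta gamma k j) /\
  (forall v : nat -> R, 0 <= quad_form N (Htilde alpha beta gamma) v).
Proof.
  split.
  { intros j k _ _. unfold Htilde. rewrite Nat.add_comm. reflexivity. }
  intro v.
  set (a := alpha + beta + 1). set (d := gamma - alpha + 1).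
  assert (hd : 0 <= d) by (apply Rabs_def2 in hag; unfold d; lra).
  apply (quad_form_nonneg_lim N (gauss_ratio_kernel a d)); auto.
  { intro n. apply gram_kernel_gauss_ratio; auto. unfold a; lra. }
  intros j k hj hk.
  assert (2 <= INR (j + k)) by (apply (le_INR 2); lia).
  unfold Htilde.
  replace (INR (j + k) + gamma + beta + 2) with (INR (j + k) + a + d) by (unfold a, d; ring).
  replace (INR (j + k) + alpha + beta + 1) with (INR (j + k) + a) by (unfold a; ring).
  apply is_lim_seq_gauss_ratio; auto. unfold a; lra.
Qed.
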